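(* Let $N$, $\mathfrak h$, $\alpha_i$, $\mathcal A$, $F$, $v_1,\dots,v_r$ be as in the context. Problem 1 has a solution if and only if Problem 2 has a solution.
   Context: A generalised Cartan matrix is $N=[n(i,j)]_{1\le i,j\le r}$ with $n(i,j)\in\mathbb Z$, $n(i,i)=2$, $n(i,j)\le 0$ for $i\neq j$, and $n(i,j)=0\iff n(j,i)=0$. Let $s$ be the corank of $N$, $\mathfrak h$ the complex vector space with basis $H_1,\dots,H_{r+s}$, and $\alpha_1,\dots,\alpha_r\in\mathfrak h^*$ linearly independent with $\alpha_j(H_i)=n(i,j)$ for $1\le i,j\le r$. $\mathcal A$ is a complex commutative algebra, $\mathrm{Der}(\mathcal A)$ its Lie algebra of derivations; for $a\in\mathcal A$, $D\in\mathrm{Der}(\mathcal A)$, $aD$ is $b\mapsto aD(b)$. $F:\mathfrak h\to\mathrm{Der}(\mathcal A)$ is a Lie algebra homomorphism and $v_1,\dots,v_r\in\mathcal A$ are invertible with $F(H)(v_i)=\alpha_i(H)v_i$ for all $H\in\mathfrak h$. For $\delta_1,\dots,\delta_r,\delta_{-1},\dots,\delta_{-r}\in\mathrm{Im}\,F$ put $\mathbf X_i=v_i\delta_i$, $\mathbf X_{-i}=v_i^{-1}\delta_{-i}$, $\mathbf H_a=F(H_a)$, and consider the relations: (a) $[\mathbf H_a,\mathbf H_b]=0$; (b) $[\mathbf X_i,\mathbf X_{-i}]=\mathbf H_i$ and $[\mathbf X_i,\mathbf X_{-j}]=0$ for $i\ne j$; (c) $[\mathbf H_a,\mathbf X_{\pm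 j}]=\pm\alpha_j(H_a)\mathbf X_{\pm j}$; (d) $\mathrm{ad}(\mathbf X_i)^{1-n(i,j)}(\mathbf X_j)=0$ for $i\ne j$; (e) $\mathrm{ad}(\mathbf X_{-i})^{1-n(i,j)}(\mathbf X_{-j})=0$ for $i\ne j$. Problem 1 has a solution if such $\delta$'s exist satisfying (a)–(e); Problem 2 has a solution if such $\delta$'s exist satisfying (a)–(c). *)

From HB Require Import structures.
From mathcomp Require Import all_boot all_order all_algebra.
From mathcomp Require Import complex.
From mathcomp Require Import reals.
Set Implicit Arguments. Unset Strict Implicit. Unset Printing Implicit Defensive.
Import Order.TTheory GRing.Theory Num.Theory.
Local Open Scope ring_scope.

Definition gen_cartan (r : nat) (N : 'M[int]_r) : Prop :=
  (forall i, N i i = 2) /\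
  (forall i j, i != j -> N i j <= 0) /\
  (forall i j, N i j = 0 <-> N j i = 0).

Section Ops.
Variables (K : fieldType) (A : comAlgType K).

Definition is_derivation (D : A -> A) : Prop :=
  (forall (c : K) (a b : A), D (c *: a + b) = c *: D a + D b) /\
  (forall a b : A, D (a * b) = a * D b + D a * b).

Definition lieb (D E : A -> A) : A -> A := fun b => D (E b) - E (D b).

Definition zeroop : A -> A := fun _ => 0.
Definition scaleop (c : K) (D : A -> A) : A -> A := fun b => c *: D b.
Definition mulop (a : A) (D : A -> A) : A -> A := fun b => a * D b.

End Ops.

Section Problems.
Variables (K : fieldType) (A : comAlgType K) (r s : nat).
Variables (N : 'M[int]_r) (al : 'M[K]_(r, r + s)) (F : 'rV[K]_(r + s) -> A -> A)
          (v vinv : 'I_r -> A).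

(* basis H_1, ..., H_(r+s) of h = K^(r+s) *)
Definition hbasis (a : 'I_(r + s)) : 'rV[K]_(r + s) := delta_mx 0 a.
(* alpha_j as a linear form on h; al j a = alpha_j(H_a) *)
Definition alphaf (j : 'I_r) (H : 'rV[K]_(r + s)) : K := (H *m al^T) 0 j.

Definition inImF (D : A -> A) : Prop := exists H, D = F H.

Definition HH (a : 'I_(r + s)) : A -> A := F (hbasis a).
Definition Xp (dp : 'I_r -> A -> A) (i : 'I_r) : A -> A := mulop (v i) (dp i).
Definition Xm (dm : 'I_r -> A -> A) (i : 'I_r) : A -> A := mulop (vinv i) (dm i).

Definition relations_abc (dp dm : 'I_r -> A -> A) : Prop :=
  (forall a b, lieb (HH a) (HH b) = (@zeroop _ A)) /\
  (forall i, lieb (Xp dp i) (Xm dm i) = HH (lshift s i)) /\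
  (forall i j, i != j -> lieb (Xp dp i) (Xm dm j) = (@zeroop _ A)) /\
  (forall a j, lieb (HH a) (Xp dp j) = scaleop (alphaf j (hbasis a)) (Xp dp j)) /\
  (forall a j, lieb (HH a) (Xm dm j) = scaleop (- alphaf j (hbasis a)) (Xm dm j)).

Definition relations_de (dp dm : 'I_r -> A -> A) : Prop :=
  (forall i j, i != j ->
     iter `|1 - N i j|%N (lieb (Xp dp i)) (Xp dp j) = (@zeroop _ A)) /\
  (forall i j, i != j ->
     iter `|1 - N i j|%N (lieb (Xm dm i)) (Xm dm j) = (@zeroop _ A)).

Definition deltas_in_ImF (dp dm : 'I_r -> A -> A) : Prop :=
  (forall i, inImF (dp i)) /\ (forall i, inImF (dm i)).

Definition Problem1 : Prop :=
  exists dp dm : 'I_r -> A -> A,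
    deltas_in_ImF dp dm /\ relations_abc dp dm /\ relations_de dp dm.

Definition Problem2 : Prop :=
  exists dp dm : 'I_r -> A -> A,
    deltas_in_ImF dp dm /\ relations_abc dp dm.

End Problems.

From HB Require Import structures.
From mathcomp Require Import all_boot all_order all_algebra.
From mathcomp Require Import complex.
From mathcomp Require Import reals.
From mathcomp Require Import ring.
From mathcomp Require Import boolp.
Import Order.TTheory GRing.Theory Num.Theory.
Set Implicit Arguments. Unset Strict Implicit. Unset Printing Implicit Defensive.
Local Open Scope ring_scope.

(* Write X_i = v_i F(p_i) and X_{-i} = v_i^{-1} F(m_i).  A bracket of two operators
   u F(x), w F(y) with u, w weight vectors of F is again of this form, so
   ad(X_i)^n X_j = v_i^n v_j F(e_n) for explicit e_n in the span of p_i, p_j; an sl_2-type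
   computation gives e_n = 0 as soon as alpha_j(p_i) = -k alpha_i(p_i) with k < n, and
   either alpha_i(p_j) = 0 or k < n - 1.  Evaluating relations (b) at the weight vectors v_t
   turns them into scalar equations which force alpha_j(p_i) = -k alpha_i(p_i) and
   alpha_j(m_i) = -k' alpha_i(m_i) with k, k' in {0, 1}, and N_ij = -(k + k'): this is exactly
   what the vanishing criterion needs for n = 1 - N_ij, on both the positive and the negative
   side. *)

Section CommutingDerivations.
Variables (K : fieldType) (V : lmodType K) (A : comAlgType K) (F : V -> A -> A).
Hypothesis F_linear : forall c x y b, F (c *: x + y) b = c *: F x b + F y b.
Hypothesis F_derivation : forall x, is_derivation (F x).
Hypothesis F_lie : forall x y, lieb (F x) (F y) = F 0.

Lemma F0 b : F 0 b = 0.
Proof.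
have := F_linear 1 0 0 b; rewrite !scale1r addr0 => /eqP.
by rewrite -{1}[F 0 b]addr0 (inj_eq (addrI _)) eq_sym => /eqP.
Qed.

Lemma FB c d x y b : F (c *: x - d *: y) b = c *: F x b - d *: F y b.
Proof.
by rewrite -scaleNr F_linear -[_ *: y]addr0 F_linear F0 addr0 scaleNr.
Qed.

Lemma F_comm x y b : F x (F y b) = F y (F x b).
Proof. by apply/eqP; rewrite -subr_eq0 -[_ - _]/(lieb (F x) (F y) b) F_lie F0. Qed.

Lemma F_Leibniz x a b : F x (a * b) = a * F x b + F x a * b.
Proof. by case: (F_derivation x). Qed.

Lemma F1 x : F x 1 = 0.
Proof.
have := F_Leibniz x 1 1; rewrite !mul1r !mulr1 => /eqP.
by rewrite -{1}[F x 1]addr0 (inj_eq (addrI _)) eq_sym => /eqP.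
Qed.

Definition weight (phi : V -> K) (u : A) := forall x, F x u = phi x *: u.

Lemma weightV phi u u' : u * u' = 1 -> weight phi u -> weight (fun x => - phi x) u'.
Proof.
move=> uu' wu x.
have : u * F x u' = - phi x *: 1.
  by apply/eqP; rewrite scaleNr -addr_eq0 -[1]uu' scalerAl -wu -F_Leibniz uu' F1.
by move/(congr1 ( *%R u')); rewrite mulrA [u' * u]mulrC uu' mul1r -scalerAr mulr1.
Qed.

Lemma weight_exp_mul phi psi u w n : weight phi u -> weight psi w ->
  weight (fun x => psi x + n%:R * phi x) (u ^+ n * w).
Proof.
move=> wu ww x; elim: n => [|n IH]; first by rewrite expr0 mul1r mul0r addr0.
rewrite exprS -mulrA F_Leibniz IH wu -scalerAl -scalerAr -scalerDl.
by rewrite mulrSr mulrDl mul1r addrA.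
Qed.

Lemma lieb_mulop phi psi u w x y : weight phi u -> weight psi w ->
  lieb (mulop u (F x)) (mulop w (F y)) = mulop (u * w) (F (psi x *: y - phi y *: x)).
Proof.
move=> wu ww; apply: functional_extensionality_dep => b.
rewrite /lieb /mulop FB !F_Leibniz wu ww F_comm.
rewrite !mulrDr -!scalerAl !scalerAr !mulrA (mulrC w u) mulrN.
by rewrite opprD addrA (addrAC (u * w * _)) subrr add0r.
Qed.

Lemma weight_eq_of_mulop phi u u' w w' x c :
  u * u' = 1 -> w * w' = 1 -> weight phi w ->
  mulop u (F x) w = c *: (u * w) -> phi x = c.
Proof.
rewrite /mulop => uu' ww' wphi; rewrite wphi -scalerAr => /eqP.
rewrite -subr_eq0 -scalerBl => /eqP/(congr1 ( *%R^~ (u' * w'))).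
rewrite mul0r -scalerAl mulrACA uu' ww' mulr1 => /eqP.
by rewrite scaler_eq0 oner_eq0 orbF subr_eq0 => /eqP.
Qed.

Section IteratedBracket.
Variables (phi psi : V -> K) (u w : A) (p q : V).
Hypotheses (phi_u : weight phi u) (psi_w : weight psi w).
Hypothesis phi_linear : forall a b x y, phi (a *: x + b *: y) = a * phi x + b * phi y.

Fixpoint serre_vec n : V :=
  if n is n'.+1 then (psi p + n'%:R * phi p) *: serre_vec n' - phi (serre_vec n') *: p
  else q.

Lemma iter_lieb_mulop n :
  iter n (lieb (mulop u (F p))) (mulop w (F q)) = mulop (u ^+ n * w) (F (serre_vec n)).
Proof.
elim: n => [|n IH]; first by rewrite /= expr0 mul1r.
by rewrite iterS IH (lieb_mulop _ _ phi_u (weight_exp_mul n phi_u psi_w)) mulrA -exprS.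
Qed.

Definition serre_coef n := \prod_(k < n) (psi p + k%:R * phi p).

(* At n = 0 the truncated [n.-1] is harmless: the factor [n%:R] vanishes. *)
Lemma serre_vecE n :
  serre_vec n = serre_coef n *: q - (n%:R * phi q * serre_coef n.-1) *: p.
Proof.
rewrite /serre_coef; elim: n => [|n IH].
  by rewrite big_ord0 scale1r !mul0r scale0r subr0.
rewrite /= IH -scaleNr phi_linear scaleNr scalerBr !scalerA big_ord_recr /=.
rewrite -addrA -opprD -scalerDl.
case: n IH => [|n] _; first by rewrite !big_ord0; congr (_ *: _ - _ *: _); ring.
by rewrite big_ord_recr /=; congr (_ *: _ - _ *: _); ring.
Qed.

Lemma serre_coef_eq0 k n : psi p = - (phi p *+ k) -> (k < n)%N -> serre_coef n = 0.
Proof.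
move=> psi_p kn; rewrite /serre_coef (bigD1 (Ordinal kn)) //= psi_p.
by rewrite mulr_natl addNr mul0r.
Qed.

Lemma iter_lieb_mulop_eq0 k n : psi p = - (phi p *+ k) -> (k < n)%N ->
  phi q = 0 \/ (k < n.-1)%N ->
  iter n (lieb (mulop u (F p))) (mulop w (F q)) = @zeroop _ A.
Proof.
move=> psi_p kn hq; rewrite iter_lieb_mulop serre_vecE (serre_coef_eq0 psi_p kn) scale0r sub0r.
have -> : n%:R * phi q * serre_coef n.-1 = 0.
  case: hq => [->|kn1]; first by rewrite mulr0 mul0r.
  by rewrite (serre_coef_eq0 psi_p kn1) mulr0.
by apply: functional_extensionality_dep => b; rewrite /mulop scale0r oppr0 F0 mulr0.
Qed.

End IteratedBracket.
End CommutingDerivations.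

Lemma eq0_or_eqN (K : idomainType) (x y z w : K) :
  x * (y + z) = 0 -> z * (x + w) = 0 -> y != 0 -> exists k : bool, x = - (w *+ k).
Proof.
move=> /eqP; rewrite mulf_eq0 => /orP[/eqP x0 _ _|yz0]; first by exists false; rewrite x0 oppr0.
move/eqP; rewrite mulf_eq0 => /orP[/eqP z0|xw0 y0].
  by move: yz0; rewrite z0 addr0 => ->.
by exists true; apply/eqP; rewrite -addr_eq0.
Qed.

Lemma mulr_eqN1_neq0 (K : idomainType) (x y : K) : x * y = -1 -> x != 0 /\ y != 0.
Proof.
by move=> xy; apply/andP; rewrite -negb_or -mulf_eq0 xy oppr_eq0 oner_eq0.
Qed.

Lemma serre_exponent (K : numFieldType) (li mi lj mj a b c d : K) (n : int) :
  li * mi = -1 -> lj * mj = -1 ->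
  a * (mj + b) = 0 -> b * (a + li) = 0 -> c * (d + mi) = 0 -> d * (lj + c) = 0 ->
  li * d + mi * a = - n%:~R ->
  exists ka kd : bool, [/\ `|1 - n|%N = (ka + kd).+1, a = - (li *+ ka),
    d = - (mi *+ kd), c = 0 \/ (ka < ka + kd)%N & b = 0 \/ (kd < ka + kd)%N].
Proof.
move=> limi ljmj ha hb hc hd hn.
have [li0 mi0] := mulr_eqN1_neq0 limi; have [lj0 mj0] := mulr_eqN1_neq0 ljmj.
have [ka eka] := eq0_or_eqN ha hb mj0; have [kd ekd] := eq0_or_eqN hd hc lj0.
exists ka, kd; split=> //.
- have : (n%:~R : K) = (- (ka + kd)%:Z)%:~R.
    by rewrite -[LHS]opprK -hn eka ekd !mulrN !mulrnAr (mulrC mi) limi; ring.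
  by move/intr_inj ->; rewrite opprK -PoszD add1n.
- case: kd ekd => [_|/= d0]; first by right; rewrite addn1.
  by left; apply/eqP; move: hc; rewrite d0 oppr0 add0r => /eqP; rewrite mulf_eq0 (negbTE mi0) orbF.
- case: ka eka => [_|/= a0]; first by right; rewrite add1n.
  by left; apply/eqP; move: hb; rewrite a0 oppr0 add0r => /eqP; rewrite mulf_eq0 (negbTE li0) orbF.
Qed.

Section CartanRealisation.
Variables (K : numFieldType) (r s : nat) (N : 'M[int]_r) (al : 'M[K]_(r, r + s)).
Variables (A : comAlgType K) (F : 'rV[K]_(r + s) -> A -> A) (v vinv : 'I_r -> A).
Hypothesis F_linear : forall c x y b, F (c *: x + y) b = c *: F x b + F y b.
Hypothesis F_derivation : forall x, is_derivation (F x).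
Hypothesis F_lie : forall x y, lieb (F x) (F y) = F 0.
Hypothesis al_cartan : forall i j, al j (lshift s i) = (N i j)%:~R.
Hypothesis N_diag : forall i, N i i = 2.
Hypothesis v_vinv : forall i, v i * vinv i = 1.
Hypothesis weight_v : forall i, weight F (alphaf al i) (v i).

Local Notation alpha := (alphaf al).

Lemma alphaf_linear t a b x y : alpha t (a *: x + b *: y) = a * alpha t x + b * alpha t y.
Proof. by rewrite /alphaf mulmxDl -!scalemxAl !mxE. Qed.

Lemma alphaf_hbasis t a : alpha t (hbasis K a) = al t a.
Proof. by rewrite /alphaf /hbasis -rowE !mxE. Qed.

Lemma weight_vinv i : weight F (fun x => - alpha i x) (vinv i).
Proof. exact: (weightV F_derivation (v_vinv i) (weight_v i)). Qed.

Lemma lieb_Xp_Xm i j p m :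
  lieb (mulop (v i) (F p)) (mulop (vinv j) (F m)) =
  mulop (v i * vinv j) (F ((- alpha j p) *: m - alpha i m *: p)).
Proof. exact: (lieb_mulop F_linear F_derivation F_lie _ _ (weight_v i) (weight_vinv j)). Qed.

Lemma alphaf_lieb_Xp_Xm_eq0 i j p m t :
  lieb (mulop (v i) (F p)) (mulop (vinv j) (F m)) = @zeroop _ A ->
  alpha j p * alpha t m + alpha i m * alpha t p = 0.
Proof.
rewrite lieb_Xp_Xm => /(congr1 (@^~ (v t))) h.
have unit_vv : v i * vinv j * (vinv i * v j) = 1 by rewrite mulrACA (mulrC (vinv j)) !v_vinv mulr1.
have := weight_eq_of_mulop unit_vv (v_vinv t) (weight_v t) (etrans h (esym (scale0r _))).
rewrite -scaleNr alphaf_linear => /eqP.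
by rewrite !mulNr -opprD oppr_eq0 => /eqP.
Qed.

Lemma alphaf_lieb_Xp_Xm_diag i p m t :
  lieb (mulop (v i) (F p)) (mulop (vinv i) (F m)) = HH F (lshift s i) ->
  alpha i p * alpha t m + alpha i m * alpha t p = - (N i t)%:~R.
Proof.
rewrite lieb_Xp_Xm v_vinv => /(congr1 (@^~ (v t))) h.
have h1 : mulop 1 (F ((- alpha i p) *: m - alpha i m *: p)) (v t) = (N i t)%:~R *: (1 * v t).
  by rewrite h /HH weight_v alphaf_hbasis al_cartan mul1r.
have := weight_eq_of_mulop (mulr1 1) (v_vinv t) (weight_v t) h1.
by rewrite -scaleNr alphaf_linear => <-; rewrite !mulNr opprD !opprK.
Qed.

Lemma alphaf_mul_eqN1 i p m :
  lieb (mulop (v i) (F p)) (mulop (vinv i) (F m)) = HH F (lshift s i) ->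
  alpha i p * alpha i m = -1.
Proof.
move/(alphaf_lieb_Xp_Xm_diag i); rewrite N_diag [alpha i m * _]mulrC -mulr2n.
move=> e; apply: (@mulIf _ 2%:R); first by rewrite pnatr_eq0.
by rewrite /= mulr_natr e mulN1r.
Qed.

Lemma serre_pair i j pi pj mi mj :
  lieb (mulop (v i) (F pi)) (mulop (vinv i) (F mi)) = HH F (lshift s i) ->
  lieb (mulop (v j) (F pj)) (mulop (vinv j) (F mj)) = HH F (lshift s j) ->
  lieb (mulop (v i) (F pi)) (mulop (vinv j) (F mj)) = @zeroop _ A ->
  lieb (mulop (v j) (F pj)) (mulop (vinv i) (F mi)) = @zeroop _ A ->
  iter `|1 - N i j|%N (lieb (mulop (v i) (F pi))) (mulop (v j) (F pj)) = @zeroop _ A /\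
  iter `|1 - N i j|%N (lieb (mulop (vinv i) (F mi))) (mulop (vinv j) (F mj)) = @zeroop _ A.
Proof.
move=> Hii Hjj Hij Hji.
have eq_ij t := alphaf_lieb_Xp_Xm_eq0 t Hij; have eq_ji t := alphaf_lieb_Xp_Xm_eq0 t Hji.
have ha : alpha j pi * (alpha j mj + alpha i mj) = 0 by rewrite -(eq_ij j); ring.
have hb : alpha i mj * (alpha j pi + alpha i pi) = 0 by rewrite -(eq_ij i); ring.
have hc : alpha i pj * (alpha j mi + alpha i mi) = 0 by rewrite -(eq_ji i); ring.
have hd : alpha j mi * (alpha j pj + alpha i pj) = 0 by rewrite -(eq_ji j); ring.
have [ka [kd [-> a_eq d_eq c_eq b_eq]]] := serre_exponent (alphaf_mul_eqN1 Hii)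
  (alphaf_mul_eqN1 Hjj) ha hb hc hd (alphaf_lieb_Xp_Xm_diag j Hii).
have neg_linear t a b x y : - alpha t (a *: x + b *: y) = a * - alpha t x + b * - alpha t y.
  by rewrite alphaf_linear opprD !mulrN.
split.
- apply: (iter_lieb_mulop_eq0 F_linear F_derivation F_lie (weight_v i) (weight_v j)
          (alphaf_linear i) a_eq); by rewrite ?ltnS ?leq_addr.
- apply: (iter_lieb_mulop_eq0 F_linear F_derivation F_lie (weight_vinv i) (weight_vinv j)
          (neg_linear i) (k := kd)); first by rewrite d_eq mulNrn !opprK.
    by rewrite ltnS leq_addl.
  by case: b_eq => [->|]; [left; rewrite oppr0 | right].
Qed.

Lemma serre_relations dp dm : deltas_in_ImF F dp dm ->
  (forall i, lieb (Xp v dp i) (Xm vinv dm i) = HH F (lshift s i)) ->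
  (forall i j, i != j -> lieb (Xp v dp i) (Xm vinv dm j) = @zeroop _ A) ->
  relations_de N v vinv dp dm.
Proof.
move=> [/choice[p /funext ->] /choice[m /funext ->]] Hdiag Hoff.
split=> i j ij; have ji : j != i by rewrite eq_sym.
  exact: (serre_pair (Hdiag i) (Hdiag j) (Hoff i j ij) (Hoff j i ji)).1.
exact: (serre_pair (Hdiag i) (Hdiag j) (Hoff i j ij) (Hoff j i ji)).2.
Qed.

End CartanRealisation.

Unset Implicit Arguments.

Theorem corollary3p13
  (R : realType) (r s : nat) (N : 'M[int]_r)
  (hN : gen_cartan N)
  (hs : s = (r - \rank (map_mx (fun z : int => z%:~R : R[i]) N))%N)
  (al : 'M[R[i]]_(r, r + s))
  (hal_free : row_free al)
  (hal : forall i j : 'I_r, al j (lshift s i) = (N i j)%:~R)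
  (A : comAlgType R[i])
  (F : 'rV[R[i]]_(r + s) -> A -> A)
  (hFlin : forall (c : R[i]) (x y : 'rV[R[i]]_(r + s)) (b : A),
             F (c *: x + y) b = c *: F x b + F y b)
  (hFder : forall x, is_derivation (F x))
  (hFlie : forall x y, lieb (F x) (F y) = F 0)
  (v vinv : 'I_r -> A)
  (hvinv : forall i, v i * vinv i = 1)
  (hv : forall (x : 'rV[R[i]]_(r + s)) (i : 'I_r),
          F x (v i) = alphaf al i x *: v i) :
  Problem1 N al F v vinv <-> Problem2 al F v vinv.
Proof.
split=> [[dp [dm [hd [habc _]]]] | [dp [dm [hd habc]]]]; first by exists dp, dm.
exists dp, dm; do 2!split=> //.
have [_ [hdiag [hoff _]]] := habc.
exact: (serre_relations hFlin hFder hFlie hal hN.1 hvinv (fun i x => hv x i) hd hdiag hoff).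
Qed.
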